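(* Fix integers $r\ge2$ and $k\ge1$. Let $H$ be a finite graph with minimum degree at least $2rk$, and let $G$ be the exact $(r-1)$-subdivision of $H$. Then $\mathrm{fw}_r(G)>k$.
   Context: Graphs are finite, simple, undirected. The exact $s$-subdivision of $H$ is obtained by replacing every edge of $H$ by a path of length $s+1$ (with new internal vertices). A $k$-flip of $G$ is obtained by choosing a partition of $V(G)$ into at most $k$ parts and, for some pairs $A,B$ of (possibly equal) parts, inverting adjacency of every pair of distinct $x\in A,y\in B$. Flipper game of radius $r$ and width $k$: $G_0=G$, runner chooses $v_0$; in round $i\ge1$ the flipper announces a $k$-flip $G_i$ of $G$, the runner moves from $v_{i-1}$ to $v_i$ along a path of length at most $r$ in $G_{i-1}$; the flipper wins if $v_i$ is isolated in $G_i$. $\mathrm{fw}_r(G)$ is the least $k$ for which the flipper has a winning strategy. *)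

From mathcomp Require Import all_boot.
Set Implicit Arguments. Unset Strict Implicit. Unset Printing Implicit Defensive.

Definition simple_graph (T : finType) (e : rel T) : Prop :=
  symmetric e /\ irreflexive e.

Definition min_degree_ge (T : finType) (e : rel T) (d : nat) : Prop :=
  forall v : T, d <= #|[set w | e v w]|.

(* Each edge {u,v} of H is represented once, by the ordered pair (u,v) with
   enum_rank u < enum_rank v; its s internal vertices are (u,v,j), j : 'I_s,
   the path being u - (u,v,0) - (u,v,1) - ... - (u,v,s-1) - v. *)
Definition subdiv_ok (V : finType) (e : rel V) (s : nat)
  (x : V + (V * V * 'I_s)) : bool :=
  match x with
  | inl _ => true
  | inr (u, v, _) => e u v && (enum_rank u < enum_rank v)
  end.

Definition subdiv_vert (V : finType) (e : rel V) (s : nat) :=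
  {x : V + (V * V * 'I_s) | subdiv_ok e x}.

Definition subdiv_adj0 (V : finType) (e : rel V) (s : nat)
  (x y : V + (V * V * 'I_s)) : bool :=
  match x, y with
  | inl a, inl b => (s == 0) && e a b
  | inl a, inr (u, v, j) | inr (u, v, j), inl a =>
      ((a == u) && (nat_of_ord j == 0)) || ((a == v) && (nat_of_ord j == s.-1))
  | inr (u, v, i), inr (u', v', j) =>
      [&& u == u', v == v' & (i.+1 == j :> nat) || (j.+1 == i :> nat)]
  end.

Definition subdiv (V : finType) (e : rel V) (s : nat) : rel (subdiv_vert e s) :=
  fun x y => subdiv_adj0 e (val x) (val y).

Definition flip (T : finType) (G : rel T) (k : nat) (p : T -> 'I_k)
  (F : rel 'I_k) : rel T :=
  fun x y => (x != y) && (G x y (+) F (p x) (p y)).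

Definition within (T : finType) (e : rel T) (n : nat) (x y : T) : Prop :=
  exists s : seq T, [/\ size s <= n, path e x s & last x s = y].

Definition isolated (T : finType) (e : rel T) (v : T) : Prop :=
  forall w, ~~ e v w.

(* flipper_wins_in G r k n Gc v : from the position where the current graph is
   Gc (= G_{i-1}) and the runner is on v (= v_{i-1}), the flipper can force a
   win within n more rounds. *)
Fixpoint flipper_wins_in (T : finType) (G : rel T) (r k n : nat)
  (Gc : rel T) (v : T) : Prop :=
  match n with
  | 0 => False
  | n'.+1 =>
      exists (p : T -> 'I_k) (F : rel 'I_k), symmetric F /\
        forall w, within Gc r v w ->
          isolated (flip G p F) w \/ flipper_wins_in G r k n' (flip G p F) w
  end.

(* The flipper has a winning strategy in the flipper game of radius r and width k
   on G (G_0 = G, runner picks v_0 freely). *)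
Definition flipper_wins (T : finType) (G : rel T) (r k : nat) : Prop :=
  forall v0 : T, exists n, flipper_wins_in G r k n G v0.

Definition fw_gt (T : finType) (G : rel T) (r k : nat) : Prop :=
  forall k', flipper_wins G r k' -> k < k'.

Arguments subdiv {V} e s.
Arguments subdiv_vert {V} e s.

(* The runner only stands on principal vertices (the vertices of H) and keeps
   its vertex a safe for the current graph: at least k other principal vertices
   are reachable from a by walks of length at most r. Safe vertices are not
   isolated, and every principal vertex is safe in G itself.
   Against a k'-flip with k' <= k, two principal vertices a, a' in a common part
   are never both unsafe, so at most k' principal vertices are unsafe and one of
   the k + 1 principal vertices the runner can reach from a stays safe. To
   compare a and a', follow the 2rk subdivided edges at a. Among those whose
   first edge survives the flip, at most (r - 1) k' walks fail to reach their
   far end: a walk leaving the ball at step m into part c is unique for (m, c),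
   as otherwise the flipped pair at that step of one walk would be a shortcut
   for the other. If the first edge a y1 was flipped away, the flip adds the
   edge a' y1, as a' lies in the part of a, and the same count applies from a'.
   Hence the two sets of reachable principal vertices have at least
   2rk - 2(r - 1)k - 1 = 2k - 1 elements together. *)

From Pilot Require Import Defs.
From mathcomp Require Import all_boot zify.
Set Implicit Arguments. Unset Strict Implicit. Unset Printing Implicit Defensive.

Section Walks.
Variables (T : finType) (g : rel T).

Fixpoint withinb n x y : bool :=
  if n is n'.+1 then withinb n' x y || [exists z, withinb n' x z && g z y]
  else x == y.

Lemma withinb_refl n x : withinb n x x.
Proof. by elim: n => [|n IHn] /=; rewrite ?eqxx ?IHn. Qed.

Lemma withinb_step n x y z : withinb n x y -> g y z -> withinb n.+1 x z.
Proof. by move=> xy yz /=; apply/orP; right; apply/existsP; exists y; rewrite xy. Qed.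

Lemma withinb_edge x y : g x y -> withinb 1 x y.
Proof. exact: withinb_step (withinb_refl 0 x). Qed.

Lemma withinP n x y : reflect (within g n x y) (withinb n x y).
Proof.
elim: n y => [|n IHn] y /=.
  apply: (iffP eqP) => [<-|[[|z s] [//= _ _ <-]]]; by exists [::].
apply: (iffP orP) =>
  [[/IHn [s [hs hp hl]] | /existsP [z /andP [/IHn [s [hs hp hl]] zy]]] | [s]].
- by exists s; split=> //; apply: leqW.
- by exists (rcons s y); rewrite size_rcons rcons_path hp hl last_rcons.
case/lastP: s => [|s z] [hs hp hl]; first by left; apply/IHn; exists [::].
move: hs hp hl; rewrite size_rcons rcons_path last_rcons ltnS => hs /andP [hp hz] <-.
by right; apply/existsP; exists (last x s); rewrite hz andbT; apply/IHn; exists s.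
Qed.

Lemma withinb_isolated n x y : isolated g x -> withinb n x y -> y = x.
Proof.
move=> iso; elim: n y => [|n IHn] y /=; first by move/eqP.
case/orP => [/IHn //|/existsP [z /andP [/IHn -> xy]]].
by move: (iso y); rewrite xy.
Qed.

End Walks.

Lemma exists_switch (P : pred nat) a b :
  a <= b -> P a -> ~~ P b -> exists2 m, a <= m < b & P m && ~~ P m.+1.
Proof.
elim: b => [|b IHb] ab Pa Pb.
  by move: ab Pa; rewrite leqn0 => /eqP -> P0; rewrite P0 in Pb.
have {}ab : a <= b.
  by move: ab; rewrite leq_eqVlt ltnS => /orP [/eqP ea|//]; rewrite -ea Pa in Pb.
case: (boolP (P b)) => Pb'; first by exists b; rewrite ?ab ?Pb' ?leqnn.
by have [m /andP [am mb] Pm] := IHb ab Pa Pb'; exists m; rewrite ?am ?Pm ?ltnS 1?ltnW.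
Qed.

Lemma card_le_labels (I L : finType) (U : {set I}) (lab : I -> L -> bool) :
  {in U, forall i, exists l, lab i l} ->
  (forall i j l, i \in U -> j \in U -> lab i l -> lab j l -> i = j) ->
  #|U| <= #|L|.
Proof.
move=> labU lab_inj; pose f i := [pick l | lab i l].
have fU i : i \in U -> exists2 l, f i = Some l & lab i l.
  move=> iU; rewrite /f; case: pickP => [l il|none]; first by exists l.
  by have [l] := labU i iU; rewrite none.
have f_inj : {in U &, injective f}.
  move=> i j iU jU; have [l -> il] := fU i iU; have [l' -> jl'] := fU j jU.
  by case=> ll'; apply: (lab_inj i j l) => //; rewrite ll'.
have Some_inj : injective (@Some L) by move=> ? ? [].
rewrite -(card_in_imset f_inj) -[#|L|]cardsT -(card_imset _ Some_inj).
apply: subset_leq_card; apply/subsetP => _ /imsetP [i iU ->].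
by have [l -> _] := fU i iU; apply: imset_f.
Qed.

Section Flip.
Variables (T : finType) (G : rel T) (k : nat) (p : T -> 'I_k) (F : rel 'I_k).
Hypothesis G_irr : irreflexive G.
Local Notation Gf := (flip G p F).

Lemma flipE x y : x != y -> Gf x y = G x y (+) F (p x) (p y).
Proof. by rewrite /flip => ->. Qed.

Lemma flip_edge x y : G x y -> ~~ F (p x) (p y) -> Gf x y.
Proof.
move=> Gxy nF; rewrite flipE ?Gxy ?(negbTE nF) //.
by apply: contraTneq Gxy => ->; rewrite G_irr.
Qed.

Lemma flip_nonedge x y : x != y -> ~~ G x y -> F (p x) (p y) -> Gf x y.
Proof. by move=> xy nG Fxy; rewrite flipE // (negbTE nG) Fxy. Qed.

Lemma flip_transfer u u' w :
  p u' = p u -> G u w -> ~~ Gf u w -> u' != w -> ~~ G u' w -> Gf u' w.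
Proof.
move=> pu Guw nGf u'w nG; apply: flip_nonedge => //; rewrite pu.
by apply: contraNT nGf; apply: flip_edge.
Qed.

Lemma card_escape (X : finType) (I : {set X}) (z : X -> nat -> T) (v : T) (n : nat) :
  (forall i, i \in I -> Gf v (z i 1)) ->
  (forall i t, i \in I -> 0 < t <= n -> G (z i t) (z i t.+1)) ->
  (forall i j t, i \in I -> j \in I -> i != j -> 0 < t <= n ->
     (z i t != z j t.+1) && ~~ G (z i t) (z j t.+1)) ->
  #|[set i in I | ~~ withinb Gf n.+1 v (z i n.+1)]| <= n * k.
Proof.
move=> z1 zG cross.
pose switch i m := withinb Gf m v (z i m) && ~~ withinb Gf m.+1 v (z i m.+1).
have switchF i m :
    i \in I -> 0 < m <= n -> switch i m -> F (p (z i m)) (p (z i m.+1)).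
  move=> iI hm /andP [near far]; apply: contraNT far => nF.
  by apply: withinb_step near _; apply: flip_edge => //; apply: zG.
rewrite -[n in n * k]card_ord -[k in _ * k]card_ord -card_prod.
(* Two walks with the same label (m, c) are equal: otherwise the flipped pair
   at step m.+1 of the first one would take it to the endpoint of the second. *)
apply: (card_le_labels
  (lab := fun i (l : 'I_n * 'I_k) => switch i l.1.+1 && (p (z i l.1.+2) == l.2))).
  move=> i; rewrite inE => /andP [iI far].
  have [m /andP [m1 mn] sw] := exists_switch (P := fun m => withinb Gf m v (z i m))
    (isT : 0 < n.+1) (withinb_edge (z1 i iI)) far.
  have mn' : m.-1 < n by lia.
  exists (Ordinal mn', p (z i m.+1)).
  by rewrite /= prednK // eqxx andbT.
move=> i j [m c]; rewrite !inE /= => /andP [iI _] /andP [jI _].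
case/andP=> swi /eqP pi /andP [/andP [_ far] pj]; apply/eqP; apply: contraNT far => ij.
have mn : 0 < m.+1 <= n by rewrite ltn_ord.
apply: withinb_step (_ : Gf (z i m.+1) (z j m.+2)); first by case/andP: swi.
have /andP [neq nG] := cross i j m.+1 iI jI ij mn.
by apply: flip_nonedge; rewrite // (eqP pj) -pi switchF.
Qed.

End Flip.

Section Subdivision.
Variables (V : finType) (e : rel V) (q : nat).
Hypotheses (e_sym : symmetric e) (e_irr : irreflexive e).
Local Notation G := (subdiv e q.+1).

Definition principal (a : V) : subdiv_vert e q.+1 := exist _ (inl a) isT.

Lemma principal_inj : injective principal.
Proof. by move=> a b [->]. Qed.

(* edge_point a x t is the vertex at distance t from a on the path replacing
   the edge ax; Defs stores that path once, oriented by enum_rank, which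
   edge_key accounts for. *)
Definition edge_key (a x : V) (t : nat) : V * V * 'I_q.+1 :=
  if enum_rank a < enum_rank x then (a, x, inord t.-1) else (x, a, inord (q.+1 - t)).

Definition edge_point (a x : V) (t : nat) : subdiv_vert e q.+1 :=
  if t == 0 then principal a else if q.+1 < t then principal x
  else insubd (principal a) (inr (edge_key a x t)).

Lemma irreflexive_subdiv : irreflexive G.
Proof. by case=> [[a|[[u w] i]] ok]; rewrite /subdiv /= ?eqxx //=; lia. Qed.

Lemma val_edge_point a x t :
  e a x -> 0 < t <= q.+1 -> val (edge_point a x t) = inr (edge_key a x t).
Proof.
move=> eax /andP [t0 tq]; rewrite /edge_point ifN -?lt0n // ifN -?leqNgt // insubdK //.
have ax : (enum_rank a : nat) != enum_rank x.
  by apply: contraTneq eax => /val_inj/enum_rank_inj ->; rewrite e_irr.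
rewrite unfold_in /edge_key; case: ltngtP ax => //= ? _; by rewrite ?eax 1?e_sym ?eax.
Qed.

Lemma edge_point_end a x : edge_point a x q.+2 = principal x.
Proof. by rewrite /edge_point /= ltnSn. Qed.

Lemma subdiv_edge_point a x t :
  e a x -> t <= q.+1 -> G (edge_point a x t) (edge_point a x t.+1).
Proof.
move=> eax tq; rewrite /subdiv.
have [->|t0] := posnP t.
  rewrite (val_edge_point eax (isT : 0 < 1 <= q.+1)) /edge_key.
  by case: ifP => _ /=; rewrite !eqxx inordK //=; lia.
have [->|tq'] := eqVneq t q.+1.
  rewrite edge_point_end val_edge_point ?leqnn // /edge_key.
  by case: ifP => _ /=; rewrite !eqxx ?inordK //=; lia.
rewrite !val_edge_point ?t0 ?tq //; last lia.
by rewrite /edge_key; case: ifP => _ /=; rewrite !eqxx !inordK /=; lia.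
Qed.

Lemma edge_point_cross a x x' t : e a x -> e a x' -> x != x' -> 0 < t <= q.+1 ->
  (edge_point a x t != edge_point a x' t.+1) &&
  ~~ G (edge_point a x t) (edge_point a x' t.+1).
Proof.
move=> eax eax' xx' ht.
have ax : (a == x) = false by apply: contraTF eax => /eqP ->; rewrite e_irr.
have ax' : (a == x') = false by apply: contraTF eax' => /eqP ->; rewrite e_irr.
have {}xx' : (x == x') = false by apply: negbTE.
rewrite -val_eqE -sum_eqE /subdiv val_edge_point //.
have [->|tq] := eqVneq t q.+1.
  rewrite edge_point_end /edge_key.
  by case: ifP => _ /=; rewrite ![x' == _]eq_sym ?ax' ?xx'.
rewrite val_edge_point //; last lia.
rewrite /edge_key; case: ifP => _; case: ifP => _ /=;
  by rewrite !xpair_eqE ?[x' == _]eq_sym ?[x == a]eq_sym ?ax ?ax' ?xx' ?andbF.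
Qed.

Lemma principal_edge_point1 a x a' : e a x -> a' != a -> a' != x ->
  (principal a' != edge_point a x 1) && ~~ G (principal a') (edge_point a x 1).
Proof.
move=> eax /negbTE a'a /negbTE a'x.
rewrite -val_eqE /subdiv val_edge_point // /edge_key.
by case: ifP => _ /=; rewrite a'a a'x.
Qed.

Lemma withinb_edge_point a x t :
  e a x -> t <= q.+2 -> withinb G t (principal a) (edge_point a x t).
Proof.
move=> eax; elim: t => [|t IHt] ht; first exact: withinb_refl.
by apply: withinb_step (IHt (ltnW ht)) _; apply: subdiv_edge_point.
Qed.
End Subdivision.

Section Runner.
Variables (V : finType) (e : rel V) (q k : nat).
Hypotheses (e_sym : symmetric e) (e_irr : irreflexive e).
Local Notation G := (subdiv e q.+1).
Local Notation principal := (principal e q).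
Local Notation edge_point := (edge_point e q).

Definition reach_principal (Gc : rel (subdiv_vert e q.+1)) (a : V) : {set V} :=
  [set b | (b != a) && withinb Gc q.+2 (principal a) (principal b)].

Definition safe (Gc : rel (subdiv_vert e q.+1)) (a : V) := k <= #|reach_principal Gc a|.

Hypothesis e_deg : min_degree_ge e (2 * q.+2 * k).

Section OneFlip.
Variables (k' : nat) (p : subdiv_vert e q.+1 -> 'I_k') (F : rel 'I_k').
Hypothesis k'_le_k : k' <= k.
Local Notation Gf := (flip G p F).

Definition cut_nbrs (a : V) : {set V} :=
  [set x | e a x & ~~ Gf (principal a) (edge_point a x 1)].

Lemma card_escape_edges (I : {set V}) (v : subdiv_vert e q.+1) (a : V) :
  {subset I <= [set x | e a x]} -> (forall x, x \in I -> Gf v (edge_point a x 1)) ->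
  #|[set x in I | ~~ withinb Gf q.+2 v (principal x)]| <= q.+1 * k'.
Proof.
move=> IN first.
have -> : [set x in I | ~~ withinb Gf q.+2 v (principal x)] =
          [set x in I | ~~ withinb Gf q.+2 v (edge_point a x q.+2)].
  by apply/setP => x; rewrite !inE edge_point_end.
apply: card_escape => //; first exact: irreflexive_subdiv.
  by move=> x t /IN; rewrite inE => eax /andP [_ tq]; apply: subdiv_edge_point.
move=> x x' t /IN; rewrite inE => eax /IN; rewrite inE => eax' xx' ht.
exact: edge_point_cross.
Qed.

Lemma card_nbrs_le a :
  #|[set x | e a x]| <= #|reach_principal Gf a| + q.+1 * k' + #|cut_nbrs a|.
Proof.
set I := [set x | e a x & Gf (principal a) (edge_point a x 1)].
have esc := @card_escape_edges I (principal a) a.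
have : [set x | e a x] \subset
       reach_principal Gf a
       :|: [set x in I | ~~ withinb Gf q.+2 (principal a) (principal x)]
       :|: cut_nbrs a.
  apply/subsetP => x; rewrite !inE => eax.
  have xa : x != a by apply: contraTneq eax => ->; rewrite e_irr.
  by rewrite xa eax; case: (withinb _ _ _ _) => //; case: (Gf _ _).
move/subset_leq_card/leq_trans; apply.
apply: leq_trans (leq_card_setU _ _) _; rewrite leq_add2r.
apply: leq_trans (leq_card_setU _ _) _; rewrite leq_add2l.
by apply: esc => x; rewrite !inE => /andP [].
Qed.

Lemma card_cut_nbrs_le a a' : a' != a -> p (principal a') = p (principal a) ->
  #|cut_nbrs a| <= #|reach_principal Gf a'| + q.+1 * k' + 1.
Proof.
move=> a'a pa'.
set I := [set x in cut_nbrs a | x != a'].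
have first x : x \in I -> Gf (principal a') (edge_point a x 1).
  rewrite !inE => /andP [/andP [eax cut] xa'].
  have a'x : a' != x by rewrite eq_sym.
  have /andP [a'x1 nG] := principal_edge_point1 q e_sym e_irr eax a'a a'x.
  apply: (flip_transfer (@irreflexive_subdiv _ e q) pa' _ cut) => //.
  exact: (subdiv_edge_point e_sym e_irr eax (t := 0)).
have esc := @card_escape_edges I (principal a') a.
have : cut_nbrs a \subset
       a' |: (reach_principal Gf a'
              :|: [set x in I | ~~ withinb Gf q.+2 (principal a') (principal x)]).
  apply/subsetP => x; rewrite !inE => cx; rewrite cx.
  by case: eqVneq => // xa'; case: (withinb _ _ _ _).
move/subset_leq_card/leq_trans; apply.
rewrite cardsU1 addnC leq_add ?leq_b1 //.
apply: leq_trans (leq_card_setU _ _) _; rewrite leq_add2l.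
by apply: esc => // x; rewrite !inE => /andP [/andP []].
Qed.

Lemma safe_of_unsafe_same_part a a' : a' != a -> p (principal a') = p (principal a) ->
  ~~ safe Gf a -> safe Gf a'.
Proof.
rewrite /safe -ltnNge => a'a pa' unsafe_a.
have := card_nbrs_le a; have := card_cut_nbrs_le a'a pa'; have := e_deg a.
have : q.+1 * k' <= q.+1 * k by rewrite leq_mul2l k'_le_k orbT.
nia.
Qed.

Lemma card_unsafe_le : #|[set a | ~~ safe Gf a]| <= k'.
Proof.
apply: leq_trans (@leq_card_in _ _ (fun a => p (principal a)) _ _) _; last by rewrite card_ord.
move=> a a'; rewrite !inE => unsafe_a unsafe_a' pa'.
apply/eqP; apply: contraNT unsafe_a => aa'.
exact: safe_of_unsafe_same_part aa' pa' unsafe_a'.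
Qed.
End OneFlip.

Lemma safe_move Gc a k' (p : subdiv_vert e q.+1 -> 'I_k') (F : rel 'I_k') : k' <= k ->
  safe Gc a ->
  exists2 b, withinb Gc q.+2 (principal a) (principal b) & safe (flip G p F) b.
Proof.
move=> k'_le_k safe_a.
have : ~~ (a |: reach_principal Gc a \subset [set b | ~~ safe (flip G p F) b]).
  apply: contraL safe_a => /subset_leq_card; rewrite cardsU1 inE eqxx /= add1n -ltnNge.
  by move/leq_trans; apply; apply: leq_trans (card_unsafe_le p F k'_le_k) _.
case/subsetPn => b; rewrite !inE negbK => /predU1P [->|/andP [_ reach]] safe_b.
  by exists a => //; apply: withinb_refl.
by exists b.
Qed.

Lemma safe_not_isolated Gc a : 0 < k -> safe Gc a -> ~ isolated Gc (principal a).
Proof.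
move=> k_gt0 safe_a iso.
have /card_gt0P [b] : 0 < #|reach_principal Gc a| by apply: leq_trans safe_a.
rewrite inE => /andP [ba /(withinb_isolated iso) /principal_inj eba].
by rewrite eba eqxx in ba.
Qed.

Lemma safe_subdiv a : safe G a.
Proof.
apply: leq_trans (_ : #|[set x | e a x]| <= _).
  by apply: leq_trans (e_deg a); rewrite leq_pmull.
apply: subset_leq_card; apply/subsetP => x; rewrite !inE => eax.
rewrite -(edge_point_end e q a x) withinb_edge_point // andbT.
by apply: contraTneq eax => ->; rewrite e_irr.
Qed.

Lemma runner_survives k' n Gc a : 0 < k -> k' <= k -> safe Gc a ->
  ~ flipper_wins_in G q.+2 k' n Gc (principal a).
Proof.
move=> k_gt0 k'_le_k; elim: n Gc a => [|n IHn] Gc a safe_a //= [p [F [_ win]]].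
have [b /withinP reach safe_b] := safe_move p F k'_le_k safe_a.
by case: (win _ reach) => [|wins]; [exact: safe_not_isolated | exact: IHn wins].
Qed.
End Runner.

Theorem mainTheorem10 (r k : nat) (V : finType) (e : rel V)
  (hr : 2 <= r) (hk : 1 <= k) (hH : simple_graph e) (hne : 0 < #|V|)
  (hdeg : min_degree_ge e (2 * r * k)) :
  fw_gt (subdiv e r.-1) r k.
Proof.
case: r hr hdeg => [|[|q]] // _ hdeg k' /= win; case: hH => e_sym e_irr.
rewrite ltnNge; apply/negP => k'_le_k.
have [a _] := card_gt0P hne; have [n wins] := win (principal e q a).
exact: (runner_survives e_sym e_irr hdeg hk k'_le_k (safe_subdiv e_sym e_irr hdeg a) wins).
Qed.
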